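(* Let $(X,\mathcal{A},p)$ be a standard Borel probability space, and let $(e_\lambda)_{\lambda\in\Lambda}$ and $(f_\lambda)_{\lambda\in\Lambda}$ be nets (indexed by the same directed set) of measure-preserving, $p$-a.s. idempotent Markov kernels on $(X,\mathcal{A},p)$, converging in the one-sided topology to kernels $e$ and $f$ respectively. If $e_\lambda\le f_\lambda$ for all $\lambda$, then $e\le f$.
   Context: Kernels are identified up to $p$-a.s. equality; composition $(h\circ k)(C\mid x)=\int h(C\mid y)k(dy\mid x)$; $e$ is a.s. idempotent if $e\circ e=e$ a.s. Order: $e\le f$ iff $e\circ f=f\circ e=e$ a.s. One-sided topology: $k_\lambda\to k$ iff $\int_X|k(B\mid x)-k_\lambda(B\mid x)|\,p(dx)\to0$ for every $B\in\mathcal{A}$. *)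

From HB Require Import structures.
From mathcomp Require Import all_boot all_order all_algebra.
From mathcomp Require Import all_classical all_reals all_analysis.
Set Implicit Arguments. Unset Strict Implicit. Unset Printing Implicit Defensive.
Import Order.TTheory GRing.Theory Num.Theory.
Local Open Scope classical_set_scope.
Local Open Scope ring_scope.

Definition is_metric (R : realType) (X : Type) (dist : X -> X -> R) : Prop :=
  [/\ forall x y, 0 <= dist x y,
      forall x y, dist x y = 0 <-> x = y,
      forall x y, dist x y = dist y x &
      forall x y z, dist x z <= dist x y + dist y z].

Definition metric_open (R : realType) (X : Type) (dist : X -> X -> R) (U : set X) :=
  forall x, U x -> exists2 eps : R, 0 < eps & [set y | dist x y < eps] `<=` U.

Definition metric_complete (R : realType) (X : Type) (dist : X -> X -> R) :=
  forall u : nat -> X,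
    (forall eps : R, 0 < eps -> exists N, forall m n, (N <= m)%N -> (N <= n)%N ->
        dist (u m) (u n) < eps) ->
    exists x, forall eps : R, 0 < eps -> exists N, forall n, (N <= n)%N -> dist (u n) x < eps.

Definition metric_separable (R : realType) (X : Type) (dist : X -> X -> R) :=
  exists D : set X, countable D /\
    forall x (eps : R), 0 < eps -> exists2 y, D y & dist x y < eps.

Definition standard_borel (R : realType) d (X : measurableType d) : Prop :=
  exists dist : X -> X -> R,
    [/\ is_metric dist, metric_complete dist, metric_separable dist &
        @measurable d X = <<s metric_open dist >>].

Local Open Scope ereal_scope.

Definition kcompose (R : realType) d (X : measurableType d)
  (h k : X -> {measure set X -> \bar R}) : X -> set X -> \bar R :=
  fun x C => \int[k x]_y h y C.

Definition kae_eq (R : realType) d (X : measurableType d)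
  (p : probability X R) (k h : X -> set X -> \bar R) : Prop :=
  forall C : set X, measurable C -> {ae p, forall x, k x C = h x C}.

Definition kmeasure_preserving (R : realType) d (X : measurableType d)
  (p : probability X R) (k : R.-pker X ~> X) : Prop :=
  forall B : set X, measurable B -> \int[p]_x k x B = p B.

Definition kidempotent (R : realType) d (X : measurableType d)
  (p : probability X R) (e : R.-pker X ~> X) : Prop :=
  kae_eq p (kcompose e e) (fun x C => e x C).

Definition kle (R : realType) d (X : measurableType d)
  (p : probability X R) (e f : R.-pker X ~> X) : Prop :=
  kae_eq p (kcompose e f) (fun x C => e x C) /\
  kae_eq p (kcompose f e) (fun x C => e x C).

Definition directed_set (L : Type) (le : L -> L -> Prop) : Prop :=
  [/\ inhabited L, (forall l, le l l),
      (forall a b c, le a b -> le b c -> le a c) &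
      (forall a b, exists c, le a c /\ le b c)].

Definition onesided_cvg (R : realType) d (X : measurableType d)
  (p : probability X R) (L : Type) (le : L -> L -> Prop)
  (kl : L -> R.-pker X ~> X) (k : R.-pker X ~> X) : Prop :=
  forall B : set X, measurable B ->
    forall eps : R, (0 < eps)%R -> exists l0, forall l, le l0 l ->
      \int[p]_x `| k x B - kl l x B | < eps%:E.

From HB Require Import structures.
From mathcomp Require Import all_boot all_order all_algebra.
From mathcomp Require Import all_classical all_reals all_analysis.
From mathcomp Require Import lra.
Set Implicit Arguments. Unset Strict Implicit. Unset Printing Implicit Defensive.
Import Order.TTheory GRing.Theory Num.Theory.
Import measurable_realfun.
Local Open Scope classical_set_scope.
Local Open Scope ring_scope.

(* A measurable test function phi with values in [0, 1] lies within 1/n of its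
   staircase n^-1 * \sum_(j < n) 1_{phi >= (j+1)/n}, so one-sided convergence
   k_l -> k on the finitely many level sets {phi >= (j+1)/n} yields
   \int p(dx) |k_x phi - k_l,x phi| -> 0.  Taking phi = h(C|.) and using that k_l
   preserves p, so that \int p(dx) k_l,x |h(C|.) - h_l(C|.)| = \int |h(C|.) - h_l(C|.)| dp,
   gives (h_l o k_l)(C|.) -> (h o k)(C|.) in L^1(p) for every measurable C.  Hence
   a.s. identities h_l o k_l = g_l pass to the limit; applied to e_l o f_l = e_l and
   f_l o e_l = e_l this gives e <= f. *)

Section net_filter.
Variables (L : Type) (le : L -> L -> Prop).
Hypothesis dirL : directed_set le.

Definition net_filter : set_system L := filter_from setT (fun l0 => [set l | le l0 l]).

Lemma net_filter_proper : ProperFilter net_filter.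
Proof.
have [[l0] refl trans up] := dirL.
apply: filter_from_proper => [|l _]; last by exists l.
apply: filter_fromT_filter => [|a b]; first by exists l0.
by have [c [ac bc]] := up a b; exists c => l cl; split; apply: trans cl.
Qed.

Lemma near_net (P : L -> Prop) :
  (exists l0, forall l, le l0 l -> P l) -> \forall l \near net_filter, P l.
Proof. by move=> [l0 Hl0]; exists l0. Qed.

Lemma near_net_and (P Q : L -> Prop) :
  (\forall l \near net_filter, P l) -> (\forall l \near net_filter, Q l) ->
  \forall l \near net_filter, P l /\ Q l.
Proof. exact: (@filterI _ _ net_filter_proper). Qed.

Lemma near_net_ex (P : L -> Prop) :
  (\forall l \near net_filter, P l) -> exists l, P l.
Proof. exact: (@filter_ex _ _ net_filter_proper). Qed.

End net_filter.

Lemma sum_ord_ltn (R : realType) (m n : nat) : (m <= n)%N ->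
  \sum_(j < n) ((j < m)%N%:R : R) = m%:R.
Proof.
move=> mn; rewrite (eq_bigr (fun j : 'I_n => if (j < m)%N then 1 else 0)).
  by rewrite -big_mkcond /= -(big_ord_widen n (fun=> 1) mn) sumr_const card_ord.
by move=> j _; case: ifP.
Qed.

Section staircase.
Context (R : realType) (d : measure_display) (X : measurableType d).
Implicit Types phi : X -> R.

Definition level_set phi (t : R) : set X := phi @^-1` `[t, +oo[.

Lemma measurable_level_set phi t :
  measurable_fun setT phi -> measurable (level_set phi t).
Proof. by move=> mphi; rewrite -[level_set _ _]setTI; exact: mphi. Qed.

Definition staircase (n : nat) phi (x : X) : R :=
  n%:R^-1 * \sum_(j < n) \1_(level_set phi (j.+1%:R / n%:R)) x.

Lemma measurable_staircase n phi :
  measurable_fun setT phi -> measurable_fun setT (staircase n phi).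
Proof.
move=> mphi; apply: measurable_funM => //; apply: measurable_sum => j.
exact/measurable_indic/measurable_level_set.
Qed.

Lemma staircase_bounds n phi x : (0 < n)%N -> 0 <= phi x <= 1 ->
  staircase n phi x <= phi x <= staircase n phi x + n%:R^-1.
Proof.
move=> n0 /andP[phi0 phi1]; have n0R : (0 : R) < n%:R by rewrite ltr0n.
have xn0 : 0 <= phi x * n%:R by rewrite mulr_ge0.
set m := Num.truncn (phi x * n%:R).
have mn : (m <= n)%N.
  by rewrite truncn_le_nat (le_lt_trans (y := n%:R)) ?ltr_nat// ler_piMl// ltW.
have -> : staircase n phi x = m%:R / n%:R.
  rewrite /staircase mulrC -(sum_ord_ltn R mn); congr (_ * _).
  apply: eq_bigr => j _; rewrite indicE /level_set.
  congr (nat_of_bool _)%:R; rewrite truncn_ge_nat// -ler_pdivrMr//.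
  by apply/idP/idP => [/set_mem|h]; [|apply/mem_set]; rewrite /= in_itv /= andbT.
have /andP[m1 m2] := truncn_itv xn0.
have -> : m%:R / n%:R + n%:R^-1 = m.+1%:R / n%:R :> R by rewrite -natr1 mulrDl mul1r.
by rewrite ler_pdivrMr// ler_pdivlMr// m1 ltW.
Qed.
End staircase.

Section probability_measure.
Context (R : realType) (d : measure_display) (X : measurableType d).
Variable mu : {measure set X -> \bar R}.
Hypothesis mu1 : mu [set: X] = 1%E.
Implicit Types phi psi : X -> R.

Lemma fine_measureK A : measurable A -> (fine (mu A))%:E = mu A.
Proof.
move=> mA; rewrite fineK// ge0_fin_numE// (@le_lt_trans _ _ 1%E) ?ltry//.
by rewrite -mu1 le_measure// inE.
Qed.

Lemma fine_measure_ge0_le1 A : measurable A -> 0 <= fine (mu A) <= 1.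
Proof.
move=> mA; rewrite -2!lee_fin fine_measureK// measure_ge0 /= -mu1.
by rewrite le_measure// inE.
Qed.

Lemma integrable_bounded (f : X -> R) (a b : R) : measurable_fun setT f ->
  (forall x, a <= f x <= b) -> mu.-integrable setT (EFin \o f).
Proof.
move=> mf fab; apply: measurable_bounded_integrable => //; first by rewrite mu1 ltry.
exists (`|a| + `|b|); split; rewrite ?num_real// => M /ltW abM x _.
apply: le_trans abM; have /andP[af fb] := fab x.
have := ler_norm a; have := ler_norm (- a); have := ler_norm b; have := ler_norm (- b).
rewrite !normrN ler_norml; lra.
Qed.

Lemma EFin_Rintegral phi (a b : R) : measurable_fun setT phi ->
  (forall x, a <= phi x <= b) -> (\int[mu]_x phi x)%:E = (\int[mu]_x (phi x)%:E)%E.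
Proof.
by move=> mphi phiab; rewrite fineK// integrable_fin_num// (integrable_bounded mphi phiab).
Qed.

Lemma Rintegral_cst1 (c : R) : \int[mu]_x c = c.
Proof. by rewrite Rintegral_cst// mu1 mulr1. Qed.

Lemma Rintegral_staircase n phi : measurable_fun setT phi ->
  \int[mu]_x staircase n phi x =
  n%:R^-1 * \sum_(j < n) fine (mu (level_set phi (j.+1%:R / n%:R))).
Proof.
move=> mphi; have mB t : measurable (level_set phi t) by exact: measurable_level_set.
rewrite /staircase RintegralZl//; last first.
  apply: (integrable_bounded (a := 0) (b := n%:R)) => [|x].
    by apply: measurable_sum => j; exact/measurable_indic/mB.
  rewrite sumr_ge0//=; apply: (le_trans (y := \sum_(j < n) 1)).
    by apply: ler_sum => j _; rewrite indicE; case: (_ \in _).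
  by rewrite sumr_const card_ord.
congr (_ * _); rewrite /Rintegral.
under eq_integral do rewrite -sumEFin.
rewrite ge0_integral_sum//; last first.
  by move=> j; exact/measurable_EFinP/measurable_indic/mB.
under eq_bigr do rewrite integral_indic// setIT -fine_measureK//.
by rewrite sumEFin.
Qed.

Lemma Rintegral_staircase_bounds n phi : (0 < n)%N -> measurable_fun setT phi ->
  (forall x, 0 <= phi x <= 1) ->
  \int[mu]_x staircase n phi x <= \int[mu]_x phi x <=
  \int[mu]_x staircase n phi x + n%:R^-1.
Proof.
move=> n0 mphi phi01; have sb x := staircase_bounds n0 (phi01 x).
have ms := measurable_staircase n mphi.
have s0 x : 0 <= staircase n phi x.
  by rewrite mulr_ge0 ?invr_ge0// sumr_ge0// => j _; rewrite indicE.
have n1 : n%:R^-1 <= 1 :> R by rewrite invf_le1 ?ler1n ?ltr0n.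
have int_phi := integrable_bounded mphi phi01.
have int_s : mu.-integrable setT (EFin \o staircase n phi).
  apply: (integrable_bounded (a := 0) (b := 1)) => // x.
  by have := sb x; have := phi01 x; have := s0 x; lra.
have int_sn : mu.-integrable setT (EFin \o (fun x => staircase n phi x + n%:R^-1)).
  apply: (integrable_bounded (a := 0) (b := 2)) => [|x]; first exact: measurable_funD.
  by have := sb x; have := phi01 x; have := s0 x; lra.
rewrite le_Rintegral//=; last by move=> x _; case/andP: (sb x).
rewrite -[X in _ <= _ + X]Rintegral_cst1 -RintegralD//; last first.
  by apply: (integrable_bounded (a := n%:R^-1) (b := n%:R^-1)) => // x; rewrite lexx.
by rewrite le_Rintegral// => x _; case/andP: (sb x).
Qed.

Lemma le_normr_RintegralB phi psi :
  measurable_fun setT phi -> (forall x, 0 <= phi x <= 1) ->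
  measurable_fun setT psi -> (forall x, 0 <= psi x <= 1) ->
  `|\int[mu]_x phi x - \int[mu]_x psi x| <= \int[mu]_x `|phi x - psi x|.
Proof.
move=> mphi phi01 mpsi psi01.
rewrite -RintegralB//; last 2 first.
- exact: integrable_bounded mphi phi01.
- exact: integrable_bounded mpsi psi01.
apply: le_normr_Rintegral => //.
apply: (integrable_bounded (a := -1) (b := 1)) => [|x]; first exact: measurable_funB.
by have := phi01 x; have := psi01 x; lra.
Qed.

End probability_measure.

Lemma integral_dist_triangle (R : realType) (d : measure_display)
    (X : measurableType d) (mu : {measure set X -> \bar R}) (u v w : X -> R) :
  measurable_fun setT u -> measurable_fun setT v -> measurable_fun setT w ->
  (\int[mu]_x `|u x - w x|%:E <=
   \int[mu]_x `|u x - v x|%:E + \int[mu]_x `|v x - w x|%:E)%E.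
Proof.
move=> mfu mfv mfw; have mdist (f g : X -> R) : measurable_fun setT f ->
    measurable_fun setT g -> measurable_fun setT (fun x => `|f x - g x|%:E).
  by move=> mf mg; apply/measurable_EFinP/measurableT_comp => //; exact: measurable_funB.
rewrite -ge0_integralD//; last 2 first.
- exact: mdist.
- exact: mdist.
apply: ge0_le_integral => //; first exact: mdist.
- by apply: emeasurable_funD; exact: mdist.
- by move=> x _; rewrite -EFinD lee_fin ler_distD.
Qed.

Section staircase_distance.
Context (R : realType) (d : measure_display) (X : measurableType d).
Variables (mu nu : {measure set X -> \bar R}) (n : nat) (phi : X -> R).
Hypotheses (mu1 : mu [set: X] = 1%E) (nu1 : nu [set: X] = 1%E).
Hypothesis mphi : measurable_fun setT phi.
Let B (j : 'I_n) := level_set phi (j.+1%:R / n%:R).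

Lemma Rintegral_staircase_dist :
  `|\int[mu]_x staircase n phi x - \int[nu]_x staircase n phi x| <=
  n%:R^-1 * \sum_(j < n) `|fine (mu (B j)) - fine (nu (B j))|.
Proof.
rewrite !Rintegral_staircase// -mulrBr normrM ger0_norm ?invr_ge0//.
by rewrite ler_wpM2l ?invr_ge0// -sumrB ler_norm_sum.
Qed.

Lemma Rintegral_dist_le_staircase : (0 < n)%N -> (forall x, 0 <= phi x <= 1) ->
  `|\int[mu]_x phi x - \int[nu]_x phi x| <=
  n%:R^-1 + n%:R^-1 * \sum_(j < n) `|fine (mu (B j)) - fine (nu (B j))|.
Proof.
move=> n0 phi01; have := Rintegral_staircase_dist.
have /andP[] := Rintegral_staircase_bounds mu1 n0 mphi phi01.
have /andP[] := Rintegral_staircase_bounds nu1 n0 mphi phi01.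
set a := \int[mu]_x phi x; set b := \int[nu]_x phi x.
set sa := \int[mu]_x _; set sb := \int[nu]_x _; set c := _ * _.
move=> b1 b2 a1 a2; rewrite !ler_norml => /andP[s1 s2].
by apply/andP; split; lra.
Qed.

End staircase_distance.

Section probability_kernel.
Context (R : realType) (d : measure_display) (X : measurableType d).
Implicit Types (h k : R.-pker X ~> X) (phi : X -> R).

Lemma fine_pkerK k x C : measurable C -> (fine (k x C))%:E = k x C.
Proof. exact/fine_measureK/prob_kernel. Qed.

Lemma fine_pker_ge0_le1 k x C : measurable C -> 0 <= fine (k x C) <= 1.
Proof. exact/fine_measure_ge0_le1/prob_kernel. Qed.

Lemma abse_fine_pker k k' x C : measurable C ->
  `|fine (k x C) - fine (k' x C)|%:E = `|k x C - k' x C|%E.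
Proof. by move=> mC; rewrite -abse_EFin EFinB !fine_pkerK. Qed.

Lemma measurable_fine_pker k C : measurable C ->
  measurable_fun setT (fun x => fine (k x C)).
Proof. by move=> mC; apply: measurableT_comp => //; exact: measurable_kernel. Qed.

Lemma measurable_Rintegral_pker k phi :
  measurable_fun setT phi -> (forall y, 0 <= phi y) ->
  measurable_fun setT (fun x => \int[k x]_y phi y).
Proof.
move=> mphi phi0; apply: measurableT_comp => //.
apply: measurable_fun_integral_kernel => //; last exact/measurable_EFinP.
by move=> U mU; exact: measurable_kernel.
Qed.

Lemma measurable_Rintegral_fine_pker h k C : measurable C ->
  measurable_fun setT (fun x => \int[k x]_y fine (h y C)).
Proof.
move=> mC; apply: measurable_Rintegral_pker; first exact: measurable_fine_pker.
by move=> y; case/andP: (fine_pker_ge0_le1 h y mC).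
Qed.

Lemma kcomposeE h k x C : measurable C ->
  kcompose h k x C = (\int[k x]_y fine (h y C))%:E.
Proof.
move=> mC; rewrite (EFin_Rintegral (prob_kernel (s := k) x) (a := 0) (b := 1)).
- by apply: eq_integral => y _; rewrite fine_pkerK.
- exact: measurable_fine_pker.
- by move=> y; exact: fine_pker_ge0_le1.
Qed.

End probability_kernel.

Section measure_preserving.
Context (R : realType) (d : measure_display) (X : measurableType d).
Variables (p : probability X R) (k : R.-pker X ~> X).
Hypothesis mpk : kmeasure_preserving p k.

Lemma integral_kmeasure_preserving (f : X -> \bar R) :
  (forall x, (0 <= f x)%E) -> measurable_fun setT f ->
  (\int[p]_x f x = \int[p]_y \int[k y]_x f x)%E.
Proof.
move=> f0 mf.
(* \int p(dy) k_y is the composition of the constant kernel p with k *)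
pose l := kprobability
  (measurable_cst (p : pprobability X R) : measurable_fun [set: unit] _).
pose k' := @kernel.kernel_snd _ _ _ unit _ _ _ k.
rewrite -[RHS](integral_kcomp l k' tt f0 mf).
by apply: eq_measure_integral => A mA _; exact/esym/mpk.
Qed.

Lemma Rintegral_kmeasure_preserving (phi : X -> R) :
  measurable_fun setT phi -> (forall x, 0 <= phi x <= 1) ->
  (\int[p]_x (\int[k x]_y phi y)%:E = \int[p]_y (phi y)%:E)%E.
Proof.
move=> mphi phi01.
rewrite [RHS]integral_kmeasure_preserving//; last 2 first.
- by move=> x; rewrite lee_fin; case/andP: (phi01 x).
- exact/measurable_EFinP.
apply: eq_integral => x _.
by rewrite (EFin_Rintegral (prob_kernel (s := k) x) mphi phi01).
Qed.

Lemma integral_dist_kmeasure_preserving (phi psi : X -> R) :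
  measurable_fun setT phi -> (forall x, 0 <= phi x <= 1) ->
  measurable_fun setT psi -> (forall x, 0 <= psi x <= 1) ->
  (\int[p]_x `|\int[k x]_y phi y - \int[k x]_y psi y|%:E <=
   \int[p]_y `|phi y - psi y|%:E)%E.
Proof.
move=> mphi phi01 mpsi psi01.
have dist01 y : 0 <= `|phi y - psi y| <= 1.
  by rewrite normr_ge0 /= ler_norml; have := phi01 y; have := psi01 y; lra.
have mdist : measurable_fun setT (fun y => `|phi y - psi y|).
  by apply: measurableT_comp => //; exact: measurable_funB.
rewrite -(Rintegral_kmeasure_preserving mdist dist01).
apply: ge0_le_integral => //.
- apply/measurable_EFinP/measurableT_comp => //.
  by apply: measurable_funB; apply: measurable_Rintegral_pker => // y;
    [case/andP: (phi01 y)|case/andP: (psi01 y)].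
- by apply/measurable_EFinP/measurable_Rintegral_pker.
- move=> x _; rewrite lee_fin.
  exact: (@le_normr_RintegralB _ _ _ (k x) (prob_kernel x) _ _ mphi phi01 mpsi psi01).
Qed.

End measure_preserving.

Lemma integral_cst_add_mean_le (R : realType) (d : measure_display)
    (X : measurableType d) (p : probability X R) n (D : 'I_n -> X -> R) (a c : R) :
  (0 < n)%N -> 0 <= a -> (forall j, measurable_fun setT (D j)) ->
  (forall j x, 0 <= D j x) -> (forall j, (\int[p]_x (D j x)%:E <= c%:E)%E) ->
  (\int[p]_x (a + n%:R^-1 * \sum_(j < n) D j x)%:E <= (a + c)%:E)%E.
Proof.
move=> n0 a0 mD D0 intD.
have mS : measurable_fun setT (fun x => \sum_(j < n) D j x) by exact: measurable_sum.
have S0 x : 0 <= \sum_(j < n) D j x by exact: sumr_ge0.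
under eq_integral do rewrite EFinD EFinM.
rewrite ge0_integralD//; last 2 first.
- by move=> x _; rewrite mule_ge0 ?lee_fin ?invr_ge0.
- exact/measurable_funeM/measurable_EFinP.
rewrite integral_cst//= probability_setT mule1 EFinD leeD2l//.
rewrite ge0_integralZl//; last 2 first.
- exact/measurable_EFinP.
- by move=> x _; rewrite lee_fin.
under eq_integral do rewrite -sumEFin.
rewrite ge0_integral_sum//; last 2 first.
- by move=> j; exact/measurable_EFinP.
- by move=> j x _; rewrite lee_fin.
apply: (le_trans (y := ((n%:R^-1)%:E * \sum_(j < n) c%:E)%E)).
  by apply: lee_wpmul2l; [rewrite lee_fin invr_ge0 | apply: lee_sum => j _].
by rewrite sumEFin sumr_const card_ord -EFinM -[c *+ n]mulr_natl mulKf ?pnatr_eq0 -?lt0n.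
Qed.

Section one_sided_convergence.
Context (R : realType) (d : measure_display) (X : measurableType d).
Variables (p : probability X R) (L : Type) (le : L -> L -> Prop).
Hypothesis dirL : directed_set le.
Implicit Types (h k : R.-pker X ~> X) (hl kl : L -> R.-pker X ~> X) (phi : X -> R).

Lemma onesided_cvg_Rintegral k kl phi : onesided_cvg p le kl k ->
  measurable_fun setT phi -> (forall x, 0 <= phi x <= 1) ->
  forall eps : R, 0 < eps -> \forall l \near net_filter le,
    (\int[p]_x (`|\int[k x]_y phi y - \int[kl l x]_y phi y|)%:E <= eps%:E)%E.
Proof.
move=> cvgk mphi phi01 eps e0; have FF := net_filter_proper dirL.
have e20 : 0 < eps / 2 by rewrite divr_gt0.
have [m] := ltr_add_invr e20; rewrite add0r; set n := m.+1 => n_lt.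
pose B (j : 'I_n) := level_set phi (j.+1%:R / n%:R).
have mB j : measurable (B j) by exact: measurable_level_set.
have cvgB : \forall l \near net_filter le, forall j,
    (\int[p]_x `|k x (B j) - kl l x (B j)| < (eps / 2)%:E)%E.
  by apply: filter_forall => j; exact/near_net/cvgk.
apply: filterS cvgB => l cvgB.
pose D j x := `|fine (k x (B j)) - fine (kl l x (B j))|.
have mD j : measurable_fun setT (D j).
  by apply: measurableT_comp => //; apply: measurable_funB; exact: measurable_fine_pker.
have D0 j x : 0 <= D j x by exact: normr_ge0.
have phi0 x : 0 <= phi x by case/andP: (phi01 x).
apply: (le_trans (y := \int[p]_x (n%:R^-1 + n%:R^-1 * \sum_(j < n) D j x)%:E)%E).
  apply: ge0_le_integral => //.
  - apply/measurable_EFinP/measurableT_comp => //.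
    by apply: measurable_funB; exact: measurable_Rintegral_pker.
  - apply/measurable_EFinP/measurable_funD => //; apply: measurable_funM => //.
    exact: measurable_sum.
  move=> x _; rewrite lee_fin.
  exact: Rintegral_dist_le_staircase (prob_kernel (s := k) x)
    (prob_kernel (s := kl l) x) mphi (ltn0Sn m) phi01.
apply: le_trans
  (@integral_cst_add_mean_le _ _ _ p n D n%:R^-1 (eps / 2) (ltn0Sn m) _ mD D0 _) _.
- by rewrite invr_ge0.
- move=> j; apply/ltW; rewrite /D.
  by under eq_integral => x _ do rewrite (abse_fine_pker _ _ _ (mB j)); exact: cvgB.
- by rewrite lee_fin; lra.
Qed.

Lemma onesided_cvg_kcompose h hl k kl C :
  (forall l, kmeasure_preserving p (kl l)) ->
  onesided_cvg p le hl h -> onesided_cvg p le kl k -> measurable C ->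
  forall eps : R, 0 < eps -> \forall l \near net_filter le,
    (\int[p]_x (`|\int[k x]_y fine (h y C) - \int[kl l x]_y fine (hl l y C)|)%:E
      <= eps%:E)%E.
Proof.
move=> mpkl cvgh cvgk mC eps e0; have FF := net_filter_proper dirL.
have e20 : 0 < eps / 2 by rewrite divr_gt0.
have mH (g : R.-pker X ~> X) := measurable_fine_pker g mC.
have H01 (g : R.-pker X ~> X) y := fine_pker_ge0_le1 g y mC.
have mI (g g' : R.-pker X ~> X) := measurable_Rintegral_fine_pker g' g mC.
have cvg12 := near_net_and dirL (onesided_cvg_Rintegral cvgk (mH h) (H01 h) e20)
  (near_net (cvgh _ mC _ e20)).
apply: filterS cvg12 => l [cvg1 cvg2].
apply: le_trans (integral_dist_triangle _ (mI k h) (mI (kl l) h) (mI (kl l) (hl l))) _.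
apply: le_trans (leeD cvg1 (integral_dist_kmeasure_preserving (mpkl l)
  (mH h) (H01 h) (mH (hl l)) (H01 (hl l)))) _.
have cvgH : (\int[p]_y `|fine (h y C) - fine (hl l y C)|%:E < (eps / 2)%:E)%E.
  by under eq_integral do rewrite abse_fine_pker//.
by apply: le_trans (leeD2l _ (ltW cvgH)) _; rewrite -EFinD lee_fin; lra.
Qed.

Lemma kcompose_ae_eq_of_cvg h hl k kl (g : R.-pker X ~> X) gl :
  (forall l, kmeasure_preserving p (kl l)) ->
  onesided_cvg p le hl h -> onesided_cvg p le kl k -> onesided_cvg p le gl g ->
  (forall l, kae_eq p (kcompose (hl l) (kl l)) (fun x C => gl l x C)) ->
  kae_eq p (kcompose h k) (fun x C => g x C).
Proof.
move=> mpkl cvgh cvgk cvgg comp_l C mC.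
pose a x := \int[k x]_y fine (h y C).
pose G (g' : R.-pker X ~> X) x := fine (g' x C).
have ma : measurable_fun setT a by exact: measurable_Rintegral_fine_pker.
have mG g' : measurable_fun setT (G g') by exact: measurable_fine_pker.
suff int0 : (\int[p]_x (`|a x - G g x|)%:E = 0)%E.
  have mD : measurable_fun setT (fun x => (a x - G g x)%:E).
    by apply/measurable_EFinP; exact: measurable_funB.
  have /(ae_eq_integral_abs p measurableT mD).1 : (\int[p]_x `|(a x - G g x)%:E| = 0)%E.
    by rewrite -int0; apply: eq_integral => x _; rewrite abse_EFin.
  apply: filterS => x /(_ I) [] /eqP; rewrite subr_eq0 => /eqP ax.
  by rewrite kcomposeE// -/(a x) ax /G fine_pkerK.
apply/eqP; rewrite eq_le integral_ge0 ?andbT//; apply/lee_addgt0Pr => e e0.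
have e20 : 0 < e / 2 by rewrite divr_gt0.
have [l [cvg1 cvg2]] := near_net_ex dirL (near_net_and dirL
  (onesided_cvg_kcompose mpkl cvgh cvgk mC e20) (near_net (cvgg _ mC _ e20))).
pose al x := \int[kl l x]_y fine (hl l y C).
have mal : measurable_fun setT al by exact: measurable_Rintegral_fine_pker.
apply: le_trans (integral_dist_triangle _ ma mal (mG g)) _.
have -> : (\int[p]_x `|al x - G g x|%:E = \int[p]_x `|G (gl l) x - G g x|%:E)%E.
  apply: ae_eq_integral => //.
  - by apply/measurable_EFinP/measurableT_comp => //; exact: measurable_funB.
  - by apply/measurable_EFinP/measurableT_comp => //; exact: measurable_funB (mG _) (mG g).
  apply: filterS (comp_l l C mC) => x.
  by rewrite kcomposeE// -/(al x) -fine_pkerK// => -[->].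
have cvgG : (\int[p]_x `|G (gl l) x - G g x|%:E < (e / 2)%:E)%E.
  by under eq_integral do rewrite distrC abse_fine_pker//.
by rewrite add0e; apply: le_trans (leeD cvg1 (ltW cvgG)) _; rewrite -EFinD lee_fin; lra.
Qed.
End one_sided_convergence.

Theorem proposition5p11 (R : realType) (d : measure_display) (X : measurableType d)
  (p : probability X R) (L : Type) (le : L -> L -> Prop)
  (e_ f_ : L -> R.-pker X ~> X) (e f : R.-pker X ~> X) :
  standard_borel R X ->
  directed_set le ->
  (forall l, kmeasure_preserving p (e_ l)) ->
  (forall l, kmeasure_preserving p (f_ l)) ->
  (forall l, kidempotent p (e_ l)) ->
  (forall l, kidempotent p (f_ l)) ->
  onesided_cvg p le e_ e ->
  onesided_cvg p le f_ f ->
  (forall l, kle p (e_ l) (f_ l)) ->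
  kle p e f.
Proof.
move=> _ dirL mpe mpf _ _ cvge cvgf lef; split.
- by apply: (kcompose_ae_eq_of_cvg dirL mpf cvge cvgf cvge) => l; case: (lef l).
- by apply: (kcompose_ae_eq_of_cvg dirL mpe cvgf cvge cvge) => l; case: (lef l).
Qed.
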